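(* There exist a common knowledge debate game, a common knowledge distinguishing debate game, and a private information distinguishing debate game each of which has the following property: the minimum error over all policies is strictly less than the minimum error over policies under which the agents use pure strategies in equilibrium.
   Context: Let $\delta$ be a special default action. CKDG: a tuple $(A_1,A_2,S,P,C_1,C_2,u)$ consisting of finite sets $A_i\not\ni\delta$, a finite set $S$, a probability mass function $P$ on $S$, maps $C_i:S\to\mathcal P(A_i)$, and $u:\{1,2\}\times S\to\mathbb R$. A policy is $M:\{1,2\}\times(A_1\cup\{\delta\})\times(A_2\cup\{\delta\})\to[0,1]$ with $M(1,\cdot,\cdot)+M(2,\cdot,\cdot)=1$. For each scenario $s$ the agents play the zero-sum game with payoff matrices $M(i,\cdot,\cdot)$, with agent 1 restricted to $C_1(s)\cup\{\delta\}$ and agent 2 to $C_2(s)\cup\{\delta\}$; $w^i_M(s)$ is its value to agent $i$. The error is $\mathbb E_{s\sim P}[\,|u(1,s)-u(2,s)|w^1_M(s)$ if $u(1,s)\le u(2,s)$, else $|u(1,s)-u(2,s)|w^2_M(s)\,]$. The agents use pure strategies in equilibrium under $M$ if every scenario's game has a pure-strategy Nash equilibrium. CKDDG: a tuple $(A,S,P,C_w,C_l)$ with $A$ finite, $\delta\notin A$, $S$ finite, $P$ a probability mass function on $S$, and $C_w,C_l:S\to\mathcal P(A)$. Policies, error and pure-strategy equilibria are those of the induced CKDG $(A,A,\{1,2\}\times S,P',C'_1,C'_2,u')$, where: - $P'((i,s))=P(s)/2$; - $C'_j((i,s))=C_w(s)$ if $i=j$, else $C_l(s)$; - $u'(j,(i,s))=[i=j]$.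 PIDDG: a tuple of the same form. A policy is $M:\{1,2\}\times(A\cup\{\delta\})^2\to[0,1]$ with $M(1,\cdot,\cdot)+M(2,\cdot,\cdot)=1$. $G_1(B,M)$ is the following Bayesian game. Each agent has action set $A\cup\{\delta\}$. A scenario $s\sim P$ is drawn, and agent 1's type is $C_w(s)$ while agent 2's is $C_l(s)$. Payoffs are as follows: - if both agents play available actions, agent $i$ gets $M(i,a_1,a_2)$; - if exactly one plays an unavailable action, it gets $0$ and the other gets $1$; - if both play unavailable actions, each gets $1/2$. $G_2(B,M)$ swaps the types. The error is $\frac{v_1(G_2(B,M))+v_2(G_1(B,M))}{2}$, where $v_i$ is the value of the zero-sum Bayesian game to agent $i$. The agents use pure strategies in equilibrium if $G_1(B,M)$ and $G_2(B,M)$ each have a pure-strategy (type-contingent) equilibrium. *)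

From HB Require Import structures.
From mathcomp Require Import all_boot all_order all_algebra.
From mathcomp Require Import classical_sets reals.
Set Implicit Arguments. Unset Strict Implicit. Unset Printing Implicit Defensive.
Import Order.TTheory GRing.Theory Num.Theory.
Local Open Scope ring_scope.
Local Open Scope classical_set_scope.

(* Conventions: agents {1,2} are represented by 'I_2, agent 1 = index 0,
   agent 2 = index 1.  The default action delta is [None] in [option A],
   a real action a is [Some a] (so delta is not in A by construction). *)

Section Defs.
Variable R : realType.

Definition agent1 : 'I_2 := ord0.
Definition agent2 : 'I_2 := ord_max.

Definition is_pmf (T : finType) (P : T -> R) : Prop :=
  (forall t, 0 <= P t) /\ \sum_(t : T) P t = 1.

Definition mixed (T : finType) (av : pred T) : set (T -> R) :=
  [set x | (forall t, 0 <= x t) /\ (forall t, ~~ av t -> x t = 0)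
           /\ \sum_(t : T) x t = 1].

Definition exp_pay (T1 T2 : finType) (g : T1 -> T2 -> R)
  (x : T1 -> R) (y : T2 -> R) : R :=
  \sum_(a : T1) \sum_(b : T2) x a * y b * g a b.

Definition value1 (T1 T2 : finType) (g1 : T1 -> T2 -> R)
  (av1 : pred T1) (av2 : pred T2) : R :=
  sup [set inf [set exp_pay g1 x y | y in mixed av2] | x in mixed av1].

Definition value2 (T1 T2 : finType) (g2 : T1 -> T2 -> R)
  (av1 : pred T1) (av2 : pred T2) : R :=
  sup [set inf [set exp_pay g2 x y | x in mixed av1] | y in mixed av2].

Definition has_pure_NE (T1 T2 : finType) (g1 g2 : T1 -> T2 -> R)
  (av1 : pred T1) (av2 : pred T2) : Prop :=
  exists a b, [/\ av1 a, av2 b,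
    (forall a', av1 a' -> g1 a' b <= g1 a b) &
    (forall b', av2 b' -> g2 a b' <= g2 a b)].

Definition avail (A : finType) (C : {set A}) : pred (option A) :=
  fun t => match t with None => true | Some a => a \in C end.

Definition is_policy (A1 A2 : finType)
  (M : 'I_2 -> option A1 -> option A2 -> R) : Prop :=
  (forall i a b, 0 <= M i a b <= 1) /\
  (forall a b, M agent1 a b + M agent2 a b = 1).

(* "min over all policies of err  <  min over pure-equilibrium policies of err",
   stated as a strict gap between the two infima *)
Definition min_err_strictly_below_pure (Pol : Type) (isPol isPure : Pol -> Prop)
  (err : Pol -> R) : Prop :=
  exists M, isPol M /\ exists c, err M < c /\
    forall M', isPol M' -> isPure M' -> c <= err M'.

Unset Implicit Arguments.
Record CKDG := mkCKDG {
  ck_A1 : finType; ck_A2 : finType; ck_S : finType;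
  ck_P : ck_S -> R;
  ck_C1 : ck_S -> {set ck_A1};
  ck_C2 : ck_S -> {set ck_A2};
  ck_u : 'I_2 -> ck_S -> R }.
Set Implicit Arguments.

Definition ckdg_wf (G : CKDG) : Prop := is_pmf (ck_P G).

Definition ckdg_policy (G : CKDG) :=
  'I_2 -> option (ck_A1 G) -> option (ck_A2 G) -> R.

Definition ckdg_w1 (G : CKDG) (M : ckdg_policy G) (s : ck_S G) : R :=
  value1 (M agent1) (avail (ck_C1 G s)) (avail (ck_C2 G s)).
Definition ckdg_w2 (G : CKDG) (M : ckdg_policy G) (s : ck_S G) : R :=
  value2 (M agent2) (avail (ck_C1 G s)) (avail (ck_C2 G s)).

Definition ckdg_error (G : CKDG) (M : ckdg_policy G) : R :=
  \sum_(s : ck_S G) ck_P G s *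
    (if ck_u G agent1 s <= ck_u G agent2 s
     then `|ck_u G agent1 s - ck_u G agent2 s| * ckdg_w1 M s
     else `|ck_u G agent1 s - ck_u G agent2 s| * ckdg_w2 M s).

Definition ckdg_pure (G : CKDG) (M : ckdg_policy G) : Prop :=
  forall s : ck_S G, has_pure_NE (M agent1) (M agent2)
                       (avail (ck_C1 G s)) (avail (ck_C2 G s)).

Unset Implicit Arguments.
Record DDG := mkDDG {
  dd_A : finType; dd_S : finType;
  dd_P : dd_S -> R;
  dd_Cw : dd_S -> {set dd_A};
  dd_Cl : dd_S -> {set dd_A} }.
Set Implicit Arguments.

Definition ddg_wf (G : DDG) : Prop := is_pmf (dd_P G).

Definition ddg_policy (G : DDG) :=
  'I_2 -> option (dd_A G) -> option (dd_A G) -> R.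

Definition ckddg_induced (G : DDG) : CKDG :=
  @mkCKDG (dd_A G) (dd_A G) ('I_2 * dd_S G)%type
    (fun p => dd_P G p.2 / 2)
    (fun p => if p.1 == agent1 then dd_Cw G p.2 else dd_Cl G p.2)
    (fun p => if p.1 == agent2 then dd_Cw G p.2 else dd_Cl G p.2)
    (fun j p => if p.1 == j then 1 else 0).

Definition ckddg_error (G : DDG) (M : ddg_policy G) : R :=
  @ckdg_error (ckddg_induced G) M.
Definition ckddg_pure (G : DDG) (M : ddg_policy G) : Prop :=
  @ckdg_pure (ckddg_induced G) M.

(* PIDDG: Bayesian games G_1, G_2.  Types of the agents are given by
   t1 t2 : S -> {set A}; a (type-contingent) strategy maps a type to a
   mixed strategy over all of A ∪ {δ}. *)
Definition pid_pay (G : DDG) (M : ddg_policy G) (i : 'I_2)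
  (T1 T2 : {set dd_A G}) (a1 a2 : option (dd_A G)) : R :=
  let ok1 := avail T1 a1 in let ok2 := avail T2 a2 in
  if ok1 && ok2 then M i a1 a2
  else if ok1 && ~~ ok2 then (if i == agent1 then 1 else 0)
  else if ~~ ok1 && ok2 then (if i == agent1 then 0 else 1)
  else 1 / 2.

Definition pid_strategies (G : DDG) : set ({set dd_A G} -> option (dd_A G) -> R) :=
  [set sg | forall T, mixed predT (sg T)].

Definition pid_U (G : DDG) (M : ddg_policy G) (i : 'I_2)
  (t1 t2 : dd_S G -> {set dd_A G})
  (sg1 sg2 : {set dd_A G} -> option (dd_A G) -> R) : R :=
  \sum_(s : dd_S G) dd_P G s *
    \sum_(a1 : option (dd_A G)) \sum_(a2 : option (dd_A G))
      sg1 (t1 s) a1 * sg2 (t2 s) a2 * pid_pay M i (t1 s) (t2 s) a1 a2.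

Definition pid_v1 (G : DDG) (M : ddg_policy G) (t1 t2 : dd_S G -> {set dd_A G}) : R :=
  sup [set inf [set pid_U M agent1 t1 t2 sg1 sg2 | sg2 in @pid_strategies G]
      | sg1 in @pid_strategies G].
Definition pid_v2 (G : DDG) (M : ddg_policy G) (t1 t2 : dd_S G -> {set dd_A G}) : R :=
  sup [set inf [set pid_U M agent2 t1 t2 sg1 sg2 | sg1 in @pid_strategies G]
      | sg2 in @pid_strategies G].

(* G_1: agent 1 has type C_w(s), agent 2 has type C_l(s); G_2 swaps them *)
Definition piddg_error (G : DDG) (M : ddg_policy G) : R :=
  (pid_v1 M (dd_Cl G) (dd_Cw G) + pid_v2 M (dd_Cw G) (dd_Cl G)) / 2.

Definition pure_strat (G : DDG) (f : {set dd_A G} -> option (dd_A G))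
  : {set dd_A G} -> option (dd_A G) -> R :=
  fun T a => if a == f T then 1 else 0.

Definition pid_has_pure_eq (G : DDG) (M : ddg_policy G)
  (t1 t2 : dd_S G -> {set dd_A G}) : Prop :=
  exists f1 f2 : {set dd_A G} -> option (dd_A G),
    (forall g1, pid_U M agent1 t1 t2 (pure_strat g1) (pure_strat f2)
                <= pid_U M agent1 t1 t2 (pure_strat f1) (pure_strat f2)) /\
    (forall g2, pid_U M agent2 t1 t2 (pure_strat f1) (pure_strat g2)
                <= pid_U M agent2 t1 t2 (pure_strat f1) (pure_strat f2)).

Definition piddg_pure (G : DDG) (M : ddg_policy G) : Prop :=
  pid_has_pure_eq M (dd_Cw G) (dd_Cl G) /\ pid_has_pure_eq M (dd_Cl G) (dd_Cw G).

End Defs.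

From mathcomp Require Import all_boot all_order all_algebra.
From mathcomp Require Import boolp classical_sets reals.
From mathcomp Require Import lra.
Set Implicit Arguments. Unset Strict Implicit. Unset Printing Implicit Defensive.
Import Order.TTheory GRing.Theory Num.Theory.
Local Open Scope ring_scope.
Local Open Scope classical_set_scope.

(* The actions form a cycle: y_c beats x_c and x_c beats y_(1-c).  In scenario
   None the correct agent holds {x_0, x_1} and the mistaken one {y_0, y_1}; in
   scenario Some c they hold {y_c} and {x_c}.  Under the policy paying whoever
   beats the other, the correct agent randomises between x_0 and x_1 in
   scenario None, so a mistaken agent wins with probability at most 1/2 there
   and never elsewhere: the error is 1/6.

   Pure strategies cannot do this.  Exchanging the agents, the error is the
   average, over a policy and its swap, of the value of agent 1 when it is
   mistaken.  If (a, b) is a pure equilibrium of scenario None with agent 1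
   correct, then a is some x_c (or the default action), and in scenario Some c
   the mistaken agent 1 plays a again against y_c, a reply agent 2 already had
   in scenario None; so it keeps the payoff u of (a, b).  With the payoff u' of
   a pure equilibrium of scenario None with agent 1 mistaken, the mistaken
   agent 1 gets at least (u + u') / 3, after the swap (2 - u - u') / 3, and the
   error is at least 1/3.  In the private-information game the types identify
   scenario None, so a pure Bayesian equilibrium restricts to a pure
   equilibrium of that scenario and the same argument applies. *)

Section SupInf.
Variables (R : realType) (X Y : Type) (O : set X) (I : set Y) (f : X -> Y -> R).
Hypothesis f01 : forall x y, O x -> I y -> 0 <= f x y <= 1.

Let inf_lb x : O x -> has_lbound [set f x y | y in I].
Proof. by move=> Ox; exists 0 => _ [y Iy <-]; case/andP: (f01 Ox Iy). Qed.

Lemma sup_inf_le c : O !=set0 -> (forall x, O x -> exists2 y, I y & f x y <= c) ->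
  sup [set inf [set f x y | y in I] | x in O] <= c.
Proof.
move=> [x0 Ox0] Oc; apply: ge_sup; first by exists (inf [set f x0 y | y in I]), x0.
move=> _ [x Ox <-]; have [y Iy le_c] := Oc x Ox.
by apply: le_trans le_c; apply: ge_inf; [exact: inf_lb | exists y].
Qed.

Lemma sup_inf_ge x c : I !=set0 -> O x -> (forall y, I y -> c <= f x y) ->
  c <= sup [set inf [set f x y | y in I] | x in O].
Proof.
move=> [y0 Iy0] Ox cx; apply: (@le_trans _ _ (inf [set f x y | y in I])).
  by apply: lb_le_inf; [exists (f x y0), y0 | move=> _ [y Iy <-]; exact: cx].
apply: ub_le_sup; last by exists x.
exists 1 => _ [x' Ox' <-]; apply: (@le_trans _ _ (f x' y0)).
  by apply: ge_inf; [exact: inf_lb | exists y0].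
by case/andP: (f01 Ox' Iy0).
Qed.

End SupInf.

Section MixedStrategies.
Variables (R : realType) (T : finType).

Definition point_mass (b : T) : T -> R := fun t => if t == b then 1 else 0.

Definition mix2 (b1 b2 : T) : T -> R := fun t => (point_mass b1 t + point_mass b2 t) / 2.

Lemma sum_point_mass b (F : T -> R) : \sum_t point_mass b t * F t = F b.
Proof.
rewrite (bigD1 b) //= /point_mass eqxx mul1r big1 ?addr0 // => t /negbTE ->.
by rewrite mul0r.
Qed.

Lemma sum_mix2 b1 b2 (F : T -> R) :
  \sum_t mix2 b1 b2 t * F t = (F b1 + F b2) / 2.
Proof.
under eq_bigr do rewrite mulrAC mulrDl.
by rewrite -big_distrl big_split !sum_point_mass.
Qed.

Lemma point_mass_mixed (av : pred T) b : av b -> mixed av (point_mass b).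
Proof.
move=> avb; split; [|split].
- by move=> t; rewrite /point_mass; case: ifP.
- by move=> t; rewrite /point_mass; case: eqP => // ->; rewrite avb.
- by have := sum_point_mass b (fun _ => 1); under eq_bigr do rewrite mulr1.
Qed.

Lemma mix2_mixed (av : pred T) b1 b2 : av b1 -> av b2 -> mixed av (mix2 b1 b2).
Proof.
move=> /point_mass_mixed[p1_ge0 [p1_av p1_sum]] /point_mass_mixed[p2_ge0 [p2_av p2_sum]].
split; [|split].
- by move=> t; rewrite divr_ge0 ?addr_ge0.
- by move=> t avt; rewrite /mix2 p1_av ?p2_av // addr0 mul0r.
- rewrite /mix2 -big_distrl big_split /= p1_sum p2_sum; lra.
Qed.

Lemma sum_mixed_le (av : pred T) x (h : T -> R) c :
  mixed av x -> (forall t, av t -> h t <= c) -> \sum_t x t * h t <= c.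
Proof.
move=> [x_ge0 [x_av x_sum]] h_le; rewrite -[c]mul1r -x_sum mulr_suml.
apply: ler_sum => t _; have [avt|avt] := boolP (av t).
  by rewrite ler_wpM2l ?h_le.
by rewrite x_av // !mul0r.
Qed.

Lemma sum_mixed_ge (av : pred T) x (h : T -> R) c :
  mixed av x -> (forall t, av t -> c <= h t) -> c <= \sum_t x t * h t.
Proof.
move=> [x_ge0 [x_av x_sum]] h_ge; rewrite -[c]mul1r -x_sum mulr_suml.
apply: ler_sum => t _; have [avt|avt] := boolP (av t).
  by rewrite ler_wpM2l ?h_ge.
by rewrite x_av // !mul0r.
Qed.

End MixedStrategies.

Arguments point_mass {R T} b.
Arguments mix2 {R T} b1 b2.
Arguments point_mass_mixed {R T av b}.
Arguments mix2_mixed {R T av b1 b2}.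

Section ExpectedPayoff.
Variables (R : realType) (T1 T2 : finType) (g : T1 -> T2 -> R).

Lemma exp_payE (x : T1 -> R) (y : T2 -> R) :
  exp_pay g x y = \sum_a x a * \sum_b y b * g a b.
Proof.
by apply: eq_bigr => a _; rewrite mulr_sumr; apply: eq_bigr => b _; rewrite mulrA.
Qed.

Lemma exp_pay_tr (x : T1 -> R) (y : T2 -> R) :
  exp_pay (fun b a => g a b) y x = exp_pay g x y.
Proof.
rewrite /exp_pay exchange_big; apply: eq_bigr => a _.
by apply: eq_bigr => b _; rewrite [y b * _]mulrC.
Qed.

Lemma value2_value1 av1 av2 : value2 g av1 av2 = value1 (fun b a => g a b) av2 av1.
Proof.
rewrite /value1 /value2; congr sup; apply: eq_imagel => y _.
by congr inf; apply: eq_imagel => x _; rewrite exp_pay_tr.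
Qed.

End ExpectedPayoff.

Section MatrixGames.
Variables (R : realType) (T1 T2 : finType) (g : T1 -> T2 -> R).
Hypothesis g01 : forall a b, 0 <= g a b <= 1.

Lemma exp_pay01 av1 av2 x y : mixed av1 x -> mixed av2 y -> 0 <= exp_pay g x y <= 1.
Proof.
move=> mx my; rewrite exp_payE; apply/andP; split.
  by apply: (sum_mixed_ge mx) => a _; apply: (sum_mixed_ge my) => b _; case/andP: (g01 a b).
by apply: (sum_mixed_le mx) => a _; apply: (sum_mixed_le my) => b _; case/andP: (g01 a b).
Qed.

Lemma value1_le (av1 : pred T1) (av2 : pred T2) y c : (exists a, av1 a) -> mixed av2 y ->
  (forall a, av1 a -> \sum_b y b * g a b <= c) -> value1 g av1 av2 <= c.
Proof.
move=> [a0 av1a0] my y_le; apply: sup_inf_le.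
- by move=> x y' mx my'; exact: exp_pay01 mx my'.
- by exists (point_mass a0); exact: point_mass_mixed.
- by move=> x mx; exists y => //; rewrite exp_payE; exact: sum_mixed_le mx _.
Qed.

Lemma value1_ge (av1 : pred T1) (av2 : pred T2) a c : (exists b, av2 b) -> av1 a ->
  (forall b, av2 b -> c <= g a b) -> c <= value1 g av1 av2.
Proof.
move=> [b0 av2b0] av1a a_ge.
apply: (sup_inf_ge _ _ (point_mass_mixed av1a)).
- by move=> x y mx my; exact: exp_pay01 mx my.
- by exists (point_mass b0); exact: point_mass_mixed.
- move=> y my; rewrite -exp_pay_tr exp_payE.
  by apply: (sum_mixed_ge my) => b avb; rewrite sum_point_mass; exact: a_ge.
Qed.

End MatrixGames.

Lemma sum_option (R : realType) (T : finType) (F : option T -> R) :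
  \sum_s F s = F None + \sum_t F (Some t).
Proof.
rewrite (bigD1 None) //= (reindex_omap Some id) => [|[]//].
by under eq_bigl do rewrite eqxx.
Qed.

Lemma sum_agents (R : realType) (T : finType) (F : 'I_2 * T -> R) :
  \sum_p F p = \sum_t (F (agent1, t) + F (agent2, t)).
Proof.
rewrite (eq_bigr (fun p => F (p.1, p.2))) => [|[] //].
rewrite -(pair_bigA _ (fun i t => F (i, t))) exchange_big /=.
apply: eq_bigr => t _; rewrite big_ord_recl big_ord1.
by congr (F (_, _) + F (_, _)); apply: val_inj.
Qed.

Definition is_pure_NE (R : realType) (T1 T2 : Type) (g1 g2 : T1 -> T2 -> R)
    (av1 : pred T1) (av2 : pred T2) a b : Prop :=
  [/\ av1 a, av2 b, (forall a', av1 a' -> g1 a' b <= g1 a b) &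
      (forall b', av2 b' -> g2 a b' <= g2 a b)].

Lemma is_pure_NE_swap (R : realType) (T1 T2 : Type) (g1 g2 : T1 -> T2 -> R)
    (h1 h2 : T2 -> T1 -> R) av1 av2 a b :
  (forall a b, h1 b a = g2 a b) -> (forall a b, h2 b a = g1 a b) ->
  is_pure_NE g1 g2 av1 av2 a b -> is_pure_NE h1 h2 av2 av1 b a.
Proof. by move=> h1E h2E [av1a av2b g1b g2a]; split=> // x; rewrite !(h1E, h2E); auto. Qed.

Definition swap_agents (R : realType) (T1 T2 : Type) (M : 'I_2 -> T1 -> T2 -> R) :
  'I_2 -> T2 -> T1 -> R :=
  fun i b a => M (if i == agent1 then agent2 else agent1) a b.

Section Policies.
Variables (R : realType) (T1 T2 : finType) (M : 'I_2 -> option T1 -> option T2 -> R).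
Hypothesis HM : is_policy M.

Lemma policy01 i a b : 0 <= M i a b <= 1.
Proof. by case: HM. Qed.

Lemma policy_agent2 a b : M agent2 a b = 1 - M agent1 a b.
Proof. by case: HM => _ /(_ a b); lra. Qed.

Lemma swap_agents_policy : is_policy (swap_agents M).
Proof.
split=> [i b a|b a]; first exact: policy01.
by rewrite /swap_agents /= policy_agent2; lra.
Qed.

End Policies.

Section DistinguishingDebate.
Variables (R : realType) (G : DDG R).
Local Notation P := (dd_P _ G).
Local Notation Cw := (dd_Cw _ G).
Local Notation Cl := (dd_Cl _ G).

Definition ckddg_error1 (M : ddg_policy G) : R :=
  \sum_s P s * value1 (M agent1) (avail (Cl s)) (avail (Cw s)).

Lemma ckddg_errorE (M : ddg_policy G) :
  ckddg_error M = (ckddg_error1 M + ckddg_error1 (swap_agents M)) / 2.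
Proof.
rewrite /ckddg_error /ckdg_error sum_agents /ckddg_error1 -big_split /= mulr_suml.
apply: eq_bigr => s _; rewrite ler10 ler01 subr0 sub0r normrN normr1 !mul1r.
by rewrite /ckdg_w1 /ckdg_w2 /= value2_value1; lra.
Qed.

Lemma ckddg_pure_NE (M : ddg_policy G) s : ckddg_pure M ->
  has_pure_NE (M agent1) (M agent2) (avail (Cw s)) (avail (Cl s)) /\
  has_pure_NE (M agent1) (M agent2) (avail (Cl s)) (avail (Cw s)).
Proof. by move=> M_pure; split; [exact: M_pure (agent1, s) | exact: M_pure (agent2, s)]. Qed.

Lemma ckddg_induced_wf : ddg_wf G -> ckdg_wf (ckddg_induced G).
Proof.
move=> [P_ge0 P_sum]; split=> [p|] /=; first by rewrite divr_ge0.
by rewrite sum_agents -[RHS]P_sum; apply: eq_bigr => s _ /=; lra.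
Qed.

End DistinguishingDebate.

Lemma optimal_strategy_pointwise (R : realType) (S : finType) (T : eqType) (X : Type)
    (P : S -> R) (t : S -> T) (F : S -> X -> R) (f : T -> X) s0 x :
  0 < P s0 -> (forall s, s != s0 -> t s != t s0) ->
  (forall g : T -> X, \sum_s P s * F s (g (t s)) <= \sum_s P s * F s (f (t s))) ->
  F s0 x <= F s0 (f (t s0)).
Proof.
move=> P_gt0 t_s0 f_opt; have := f_opt (fun u => if u == t s0 then x else f u).
rewrite [X in X <= _](bigD1 s0) // [X in _ <= X](bigD1 s0) //= eqxx.
rewrite (eq_bigr (fun s => P s * F s (f (t s)))) => [|s /t_s0/negbTE-> //].
by rewrite lerD2r ler_pM2l.
Qed.

Section PrivateInformation.
Variables (R : realType) (G : DDG R) (M : ddg_policy G).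
Local Notation A := (dd_A _ G).
Local Notation P := (dd_P _ G).

Lemma pid_pay_unavailable1 T1 T2 a b :
  ~~ avail T1 a -> avail T2 b -> pid_pay M agent1 T1 T2 a b = 0.
Proof. by rewrite /pid_pay => /negbTE-> ->. Qed.

Lemma pid_pay_swap1 T1 T2 a b :
  pid_pay (swap_agents M) agent1 T2 T1 b a = pid_pay M agent2 T1 T2 a b.
Proof. by rewrite /pid_pay; case: (avail T1 a); case: (avail T2 b). Qed.

Lemma pid_pay_swap2 T1 T2 a b :
  pid_pay (swap_agents M) agent2 T2 T1 b a = pid_pay M agent1 T1 T2 a b.
Proof. by rewrite /pid_pay; case: (avail T1 a); case: (avail T2 b). Qed.

Lemma pid_U_swap t1 t2 sg1 sg2 :
  pid_U (swap_agents M) agent1 t2 t1 sg2 sg1 = pid_U M agent2 t1 t2 sg1 sg2.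
Proof.
apply: eq_bigr => s _; congr (_ * _); rewrite exchange_big.
apply: eq_bigr => a _; apply: eq_bigr => b _.
by rewrite pid_pay_swap1 [sg2 _ b * _]mulrC.
Qed.

Lemma pid_v2_swap t1 t2 : pid_v2 M t1 t2 = pid_v1 (swap_agents M) t2 t1.
Proof.
rewrite /pid_v1 /pid_v2; congr sup; apply: eq_imagel => sg2 _.
by congr inf; apply: eq_imagel => sg1 _; rewrite pid_U_swap.
Qed.

Lemma piddg_errorE :
  piddg_error M = (pid_v1 M (dd_Cl _ G) (dd_Cw _ G)
                   + pid_v1 (swap_agents M) (dd_Cl _ G) (dd_Cw _ G)) / 2.
Proof. by rewrite /piddg_error pid_v2_swap. Qed.

Lemma pure_stratE (f : {set A} -> option A) T : pure_strat f T = point_mass (f T).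
Proof. by []. Qed.

Lemma pid_U_pure_strat i t1 t2 f1 f2 :
  pid_U M i t1 t2 (pure_strat f1) (pure_strat f2) =
  \sum_s P s * pid_pay M i (t1 s) (t2 s) (f1 (t1 s)) (f2 (t2 s)).
Proof.
apply: eq_bigr => s _; congr (_ * _).
by rewrite -/(exp_pay _ _ _) exp_payE !pure_stratE !sum_point_mass.
Qed.

Lemma pid_pure_eq_NE t1 t2 s0 : 0 < P s0 ->
  (forall s, s != s0 -> t1 s != t1 s0) -> (forall s, s != s0 -> t2 s != t2 s0) ->
  pid_has_pure_eq M t1 t2 ->
  has_pure_NE (pid_pay M agent1 (t1 s0) (t2 s0)) (pid_pay M agent2 (t1 s0) (t2 s0))
              predT predT.
Proof.
move=> P_gt0 t1_s0 t2_s0 [f1 [f2 [f1_opt f2_opt]]].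
exists (f1 (t1 s0)), (f2 (t2 s0)); split=> // [a _|b _].
  pose F s a := pid_pay M agent1 (t1 s) (t2 s) a (f2 (t2 s)).
  apply: (@optimal_strategy_pointwise _ _ _ _ P t1 F f1) => // g.
  by have := f1_opt g; rewrite !pid_U_pure_strat.
pose F s b := pid_pay M agent2 (t1 s) (t2 s) (f1 (t1 s)) b.
apply: (@optimal_strategy_pointwise _ _ _ _ P t2 F f2) => // g.
by have := f2_opt g; rewrite !pid_U_pure_strat.
Qed.

Hypothesis HM : is_policy M.

Lemma pid_pay01 i T1 T2 a b : 0 <= pid_pay M i T1 T2 a b <= 1.
Proof.
rewrite /pid_pay; case: (avail T1 a); case: (avail T2 b) => /=;
  rewrite ?policy01 //; case: (i == agent1); apply/andP; lra.
Qed.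

Lemma pid_pay_agent2 T1 T2 a b :
  pid_pay M agent2 T1 T2 a b = 1 - pid_pay M agent1 T1 T2 a b.
Proof.
rewrite /pid_pay; case: (avail T1 a); case: (avail T2 b) => /=;
  rewrite ?policy_agent2 //; lra.
Qed.

Lemma pid_pay_mono1 T1 T2 T1' T2' a b :
  avail T1 a -> avail T1' a -> (forall x, avail T2' x -> avail T2 x) ->
  pid_pay M agent1 T1 T2 a b <= pid_pay M agent1 T1' T2' a b.
Proof.
move=> T1a T1'a T2'T2; rewrite /pid_pay T1a T1'a /=.
case T2'b: (avail T2' b); first by rewrite T2'T2.
by case: (avail T2 b) => //; case/andP: (policy01 HM agent1 a b).
Qed.

Hypothesis HP : ddg_wf G.

Lemma pid_U01 i t1 t2 sg1 sg2 : pid_strategies sg1 -> pid_strategies sg2 ->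
  0 <= pid_U M i t1 t2 sg1 sg2 <= 1.
Proof.
case: HP => P_ge0 P_sum sg1S sg2S.
have E01 s : 0 <= exp_pay (pid_pay M i (t1 s) (t2 s)) (sg1 (t1 s)) (sg2 (t2 s)) <= 1.
  exact: (exp_pay01 (pid_pay01 i (t1 s) (t2 s)) (sg1S (t1 s)) (sg2S (t2 s))).
apply/andP; split.
  by apply: sumr_ge0 => s _; rewrite mulr_ge0 //; case/andP: (E01 s).
rewrite -P_sum; apply: ler_sum => s _; rewrite -[leRHS]mulr1 ler_wpM2l //.
by case/andP: (E01 s).
Qed.

Lemma pid_strategies_point_mass (k : {set A} -> option A) :
  pid_strategies (fun T => point_mass (k T)).
Proof. by move=> T; exact: point_mass_mixed. Qed.

Lemma pid_v1_le t1 t2 sg2 (c : dd_S _ G -> R) : pid_strategies sg2 ->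
  (forall s a, \sum_b sg2 (t2 s) b * pid_pay M agent1 (t1 s) (t2 s) a b <= c s) ->
  pid_v1 M t1 t2 <= \sum_s P s * c s.
Proof.
move=> sg2S sg2_le; apply: sup_inf_le.
- by move=> sg1 sg2' ? ?; exact: pid_U01.
- by exists (fun T => point_mass None); exact: pid_strategies_point_mass.
- move=> sg1 sg1S; exists sg2 => //; case: HP => P_ge0 _.
  apply: ler_sum => s _; rewrite ler_wpM2l // -/(exp_pay _ _ _) exp_payE.
  by apply: (sum_mixed_le (sg1S _)) => a _; exact: sg2_le.
Qed.

Lemma pid_v1_ge t1 t2 (k : {set A} -> option A) (n : dd_S _ G -> R) :
  (forall s b, n s <= pid_pay M agent1 (t1 s) (t2 s) (k (t1 s)) b) ->
  \sum_s P s * n s <= pid_v1 M t1 t2.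
Proof.
move=> k_ge; apply: (sup_inf_ge _ _ (pid_strategies_point_mass k)).
- by move=> sg1 sg2 ? ?; exact: pid_U01.
- by exists (fun T => point_mass None); exact: pid_strategies_point_mass.
- move=> sg2 sg2S; case: HP => P_ge0 _.
  apply: ler_sum => s _; rewrite ler_wpM2l // -/(exp_pay _ _ _) -exp_pay_tr exp_payE.
  apply: (sum_mixed_ge (sg2S _)) => b _.
  by rewrite (sum_point_mass _ (fun a => pid_pay M agent1 (t1 s) (t2 s) a b)).
Qed.

End PrivateInformation.

(* (false, c) is x_c and (true, c) is y_c. *)
Local Notation act := (bool * bool)%type.

Definition beats (a b : act) : bool := (a.1 != b.1) && ((a.2 == b.2) == a.1).

Definition wins (a b : option act) : bool :=
  if a is Some a then (if b is Some b then beats a b else true) else false.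

Section CycleGame.
Variable R : realType.

Definition cycle_score (a b : option act) : R := (1 + (wins a b)%:R - (wins b a)%:R) / 2.

Definition cycle_Cw (s : option bool) : {set act} :=
  if s is Some c then [set (true, c)] else [set a | ~~ a.1].
Definition cycle_Cl (s : option bool) : {set act} :=
  if s is Some c then [set (false, c)] else [set a | a.1].

Definition cycle_game : DDG R := @mkDDG R act (option bool) (fun _ => 1 / 3) cycle_Cw cycle_Cl.

Definition cycle_policy : ddg_policy cycle_game :=
  fun i a b => if i == agent1 then cycle_score a b else cycle_score b a.

Lemma cycle_policy_is_policy : is_policy cycle_policy.
Proof.
rewrite /cycle_policy /cycle_score; split=> [i a b|a b] /=; last lra.
by case: (i == agent1); case: (wins a b); case: (wins b a) => /=; apply/andP; lra.
Qed.

Lemma swap_cycle_policy : swap_agents cycle_policy = cycle_policy.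
Proof. by apply/funext=> i; apply/funext=> b; apply/funext=> a; case: i => [[|[|]]]. Qed.

Lemma cycle_game_wf : ddg_wf cycle_game.
Proof.
split=> [s|] /=; first lra.
by rewrite sum_option big_bool /=; lra.
Qed.

Lemma sum_cycle (F : option bool -> R) :
  \sum_s dd_P _ cycle_game s * F s = (F None + F (Some true) + F (Some false)) / 3.
Proof. by rewrite sum_option big_bool /=; lra. Qed.

Lemma avail_cycle_Cw_None a : avail (cycle_Cw None) a -> exists c, avail (cycle_Cl (Some c)) a.
Proof.
case: a => [[[] c]|]; rewrite /= ?inE // => _; last by exists true.
by exists c; rewrite inE.
Qed.

Lemma avail_cycle_Cw_Some c x : avail (cycle_Cw (Some c)) x -> avail (cycle_Cl None) x.
Proof. by case: x => [x|] //=; rewrite !inE => /eqP->. Qed.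

Lemma avail_cycle_Cl_Some c x : avail (cycle_Cl (Some c)) x -> avail (cycle_Cw None) x.
Proof. by case: x => [x|] //=; rewrite !inE => /eqP->. Qed.

Lemma cycle_Cw_inj s : s != None -> cycle_Cw s != cycle_Cw None.
Proof. by case: s => // c _; apply/eqP => /setP/(_ (true, c)); rewrite !inE eqxx. Qed.

Lemma cycle_Cl_inj s : s != None -> cycle_Cl s != cycle_Cl None.
Proof. by case: s => // c _; apply/eqP => /setP/(_ (false, c)); rewrite !inE eqxx. Qed.

Lemma cycle_ckddg_error : ckddg_error cycle_policy <= 1 / 6.
Proof.
have g01 := policy01 cycle_policy_is_policy agent1.
have V0 : value1 (cycle_policy agent1) (avail (cycle_Cl None)) (avail (cycle_Cw None))
    <= 1 / 2.
  apply: (value1_le g01 _ (@mix2_mixed _ _ _ (Some (false, false)) (Some (false, true)) _ _));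
    [by exists None | by rewrite /= inE | by rewrite /= inE |].
  move=> a; rewrite sum_mix2 /cycle_policy /cycle_score.
  by case: a => [[[] []]|]; rewrite /= ?inE //= => _; lra.
have V c : value1 (cycle_policy agent1) (avail (cycle_Cl (Some c)))
    (avail (cycle_Cw (Some c))) <= 0.
  apply: (value1_le g01 _ (@point_mass_mixed _ _ _ (Some (true, c)) _)); first by exists None.
    by rewrite /= inE.
  move=> a; rewrite sum_point_mass /cycle_policy /cycle_score.
  by case: a => [[[] []]|]; case: c; rewrite /= ?inE //= => _; lra.
rewrite ckddg_errorE swap_cycle_policy /ckddg_error1 sum_cycle.
by have := V true; have := V false; lra.
Qed.

Lemma cycle_piddg_error : piddg_error cycle_policy <= 1 / 6.
Proof.
rewrite piddg_errorE swap_cycle_policy.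
suff : pid_v1 cycle_policy cycle_Cl cycle_Cw <= 1 / 6 by lra.
(* [(false, false) \in T] singles out the type [cycle_Cw None], and
   [(true, true) \in T] reads c off the type [cycle_Cw (Some c)]. *)
pose sg2 (T : {set act}) : option act -> R :=
  if (false, false) \in T then mix2 (Some (false, false)) (Some (false, true))
  else point_mass (Some (true, (true, true) \in T)).
pose c (s : option bool) : R := if s is None then 1 / 2 else 0.
apply: (le_trans (@pid_v1_le _ cycle_game _ cycle_policy_is_policy cycle_game_wf _ _ sg2 c _ _)).
- by move=> T; rewrite /sg2; case: ifP => _; [exact: mix2_mixed | exact: point_mass_mixed].
- case=> [[]|] a; rewrite /sg2 /c /= !inE ?xpair_eqE /= ?sum_mix2 ?sum_point_mass;
    rewrite /pid_pay /cycle_policy /cycle_score;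
    case: a => [[[] []]|]; rewrite /= ?inE ?xpair_eqE /=; lra.
- by rewrite sum_cycle /c; lra.
Qed.

Section PureLowerBounds.
Variables (M : ddg_policy cycle_game) (HM : is_policy M).

Lemma cycle_ckddg_error1_ge a b a' b' :
  is_pure_NE (M agent1) (M agent2) (avail (cycle_Cw None)) (avail (cycle_Cl None)) a b ->
  is_pure_NE (M agent1) (M agent2) (avail (cycle_Cl None)) (avail (cycle_Cw None)) a' b' ->
  (M agent1 a b + M agent1 a' b') / 3 <= ckddg_error1 M.
Proof.
move=> [Cw_a _ _ b_br] [Cl_a' _ _ b'_br].
pose V s := value1 (M agent1) (avail (cycle_Cl s)) (avail (cycle_Cw s)).
have V_ge s a0 c : avail (cycle_Cl s) a0 ->
    (forall x, avail (cycle_Cw s) x -> c <= M agent1 a0 x) -> c <= V s.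
  by move=> Cl_a0; apply: (value1_ge (policy01 HM agent1)) => //; exists None.
have V_ge0 s : 0 <= V s by apply: (V_ge s None) => // x _; case/andP: (policy01 HM agent1 None x).
have [c Cl_a] := avail_cycle_Cw_None Cw_a.
have Va : M agent1 a b <= V (Some c).
  by apply: (V_ge _ a) => // x /avail_cycle_Cw_Some/b_br; rewrite !(policy_agent2 HM); lra.
have Va' : M agent1 a' b' <= V None.
  by apply: (V_ge _ a') => // x /b'_br; rewrite !(policy_agent2 HM); lra.
rewrite /ckddg_error1 sum_cycle -/(V _) -/(V _) -/(V _).
by have := V_ge0 (Some true); have := V_ge0 (Some false); case: c {Cl_a} Va; lra.
Qed.

Lemma cycle_pid_v1_ge a b a' b' :
  is_pure_NE (pid_pay M agent1 (cycle_Cw None) (cycle_Cl None))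
             (pid_pay M agent2 (cycle_Cw None) (cycle_Cl None)) predT predT a b ->
  is_pure_NE (pid_pay M agent1 (cycle_Cl None) (cycle_Cw None))
             (pid_pay M agent2 (cycle_Cl None) (cycle_Cw None)) predT predT a' b' ->
  (pid_pay M agent1 (cycle_Cw None) (cycle_Cl None) a b
   + pid_pay M agent1 (cycle_Cl None) (cycle_Cw None) a' b') / 3
  <= pid_v1 M cycle_Cl cycle_Cw.
Proof.
move=> [_ _ _ b_br] [_ _ _ b'_br].
set v := pid_pay M agent1 _ _ a b; set v' := pid_pay M agent1 _ _ a' b'.
have b_min x : v <= pid_pay M agent1 (cycle_Cw None) (cycle_Cl None) a x.
  by have := b_br x isT; rewrite !(pid_pay_agent2 HM) -/v; lra.
have b'_min x : v' <= pid_pay M agent1 (cycle_Cl None) (cycle_Cw None) a' x.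
  by have := b'_br x isT; rewrite !(pid_pay_agent2 HM) -/v'; lra.
have pay_ge0 T1 T2 a0 b0 : 0 <= pid_pay M agent1 T1 T2 a0 b0.
  by case/andP: (pid_pay01 HM agent1 T1 T2 a0 b0).
(* Agent 1 replays a in every scenario Some c; [(true, false) \in T] singles
   out the type [cycle_Cl None]. *)
pose k (T : {set act}) := if (true, false) \in T then a' else a.
pose n s := if s is Some c then (if avail (cycle_Cl (Some c)) a then v else 0) else v'.
apply: (le_trans _ (@pid_v1_ge _ _ M HM cycle_game_wf cycle_Cl cycle_Cw k n _)).
  rewrite sum_cycle /n; have v_ge0 : 0 <= v := pay_ge0 _ _ _ _.
  have [/avail_cycle_Cw_None[c Cl_a]|Cw_a] := boolP (avail (cycle_Cw None) a).
    by case: c Cl_a => ->; case: ifP; lra.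
  (* agent 2 beats an unavailable a with the default action *)
  have : v <= 0 by have := b_min None; rewrite pid_pay_unavailable1.
  by case: ifP; case: ifP; lra.
case=> [c|] x; rewrite /k /= inE //=.
case: ifP => [Cl_a|_] //.
apply: le_trans (b_min x) _.
apply: (pid_pay_mono1 HM) => //; [exact: avail_cycle_Cl_Some Cl_a | exact: avail_cycle_Cw_Some].
Qed.

End PureLowerBounds.

Lemma cycle_ckddg_error_pure (M : ddg_policy cycle_game) :
  is_policy M -> ckddg_pure M -> 1 / 3 <= ckddg_error M.
Proof.
move=> HM M_pure.
have [[a [b ab]] [a' [b' ab']]] := @ckddg_pure_NE _ cycle_game M None M_pure.
have := cycle_ckddg_error1_ge HM ab ab'.
have := cycle_ckddg_error1_ge (swap_agents_policy HM)
  (is_pure_NE_swap (fun _ _ => erefl) (fun _ _ => erefl) ab')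
  (is_pure_NE_swap (fun _ _ => erefl) (fun _ _ => erefl) ab).
by rewrite ckddg_errorE /swap_agents /= !(policy_agent2 HM); lra.
Qed.

Lemma cycle_piddg_error_pure (M : ddg_policy cycle_game) :
  is_policy M -> piddg_pure M -> 1 / 3 <= piddg_error M.
Proof.
move=> HM [M_pure_wl M_pure_lw].
have P_gt0 : 0 < dd_P _ cycle_game None by rewrite /=; lra.
have [a [b ab]] := pid_pure_eq_NE P_gt0 cycle_Cw_inj cycle_Cl_inj M_pure_wl.
have [a' [b' ab']] := pid_pure_eq_NE P_gt0 cycle_Cl_inj cycle_Cw_inj M_pure_lw.
have := cycle_pid_v1_ge HM ab ab'.
have := cycle_pid_v1_ge (swap_agents_policy HM)
  (is_pure_NE_swap (pid_pay_swap1 M _ _) (pid_pay_swap2 M _ _) ab')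
  (is_pure_NE_swap (pid_pay_swap1 M _ _) (pid_pay_swap2 M _ _) ab).
by rewrite piddg_errorE !pid_pay_swap1 !(pid_pay_agent2 HM); lra.
Qed.

End CycleGame.

Theorem proposition3p7 (R : realType) :
  [/\ exists G : CKDG R, ckdg_wf G /\
        min_err_strictly_below_pure (@is_policy R _ _) (@ckdg_pure R G) (@ckdg_error R G),
      exists G : DDG R, ddg_wf G /\
        min_err_strictly_below_pure (@is_policy R _ _) (@ckddg_pure R G) (@ckddg_error R G)
    & exists G : DDG R, ddg_wf G /\
        min_err_strictly_below_pure (@is_policy R _ _) (@piddg_pure R G) (@piddg_error R G)].
Proof.
have ckddg_gap : min_err_strictly_below_pure (@is_policy R _ _)
    (@ckddg_pure R (cycle_game R)) (@ckddg_error R (cycle_game R)).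
  exists (@cycle_policy R); split; first exact: cycle_policy_is_policy.
  exists (1 / 3); split; last exact: cycle_ckddg_error_pure.
  by have := cycle_ckddg_error R; lra.
have piddg_gap : min_err_strictly_below_pure (@is_policy R _ _)
    (@piddg_pure R (cycle_game R)) (@piddg_error R (cycle_game R)).
  exists (@cycle_policy R); split; first exact: cycle_policy_is_policy.
  exists (1 / 3); split; last exact: cycle_piddg_error_pure.
  by have := cycle_piddg_error R; lra.
have wf := cycle_game_wf R.
split;
  [exists (ckddg_induced (cycle_game R)) | exists (cycle_game R) | exists (cycle_game R)] => //.
by split; [exact: ckddg_induced_wf | exact: ckddg_gap].
Qed.
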